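(* Let $r\ge0$ be an integer, $\lambda\ge0$, $\theta^*,\epsilon\in\mathbb{R}^n$ and $y=\theta^*+\epsilon$. Let $\hat\theta^{(r,\lambda)}$ be any $r$th order Minmax Trend Filtering estimator computed from $y$ with tuning parameter $\lambda$. Then for every $i\in[n]$, $$\max_{J\in\mathcal{I}:\, i\in J}\Big(\mathrm{Bias}^{(r)}_-(i,J,\theta^* )-SE^{(r)}(i,J,\lambda)\Big)\le \hat\theta^{(r,\lambda)}_i-\theta^*_i\le \min_{J\in\mathcal{I}:\, i\in J}\Big(\mathrm{Bias}^{(r)}_+(i,J,\theta^* )+SE^{(r)}(i,J,\lambda)\Big).$$
   Context: $[n]=\{1,\dots,n\}$; an interval is $[a:b]=\{a,\dots,b\}$, $1\le a\le b\le n$; $\mathcal{I}$ is the set of all intervals; $v_I$ is the restriction of $v$ to $I$. For an interval $I=[a:b]$, $P^{(|I|,r)}$ is the orthogonal projection matrix in $\mathbb{R}^{|I|}$ onto $\{(p(a/n),\dots,p(b/n)): p \text{ a real polynomial of degree}\le r\}$ (this depends only on $|I|$); for $i\in I$, $(P^{(|I|,r)}v_I)_i$ is the entry of $P^{(|I|,r)}v_I$ at the position of $i$. For intervals $I\subseteq J=[j_1:j_2]$: $C_{I,J}=1$ if $I\cap\{j_1,j_2\}=\emptyset$, $C_{I,J}=-1$ if $I=J$, $C_{I,J}=0$ otherwise. An $r$th order Minmax Trend Filtering estimator with tuning $\lambda\ge0$ is any $\hat\theta\in\mathbb{R}^n$ such that for every $i$, $\max_{J\in\mathcal{I}: i\in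 J}\min_{I\in\mathcal{I}: i\in I\subseteq J}[(P^{(|I|,r)}y_I)_i+\lambda C_{I,J}/|I|]\le\hat\theta_i\le\min_{J\in\mathcal{I}: i\in J}\max_{I\in\mathcal{I}: i\in I\subseteq J}[(P^{(|I|,r)}y_I)_i-\lambda C_{I,J}/|I|]$. Biases: $\mathrm{Bias}^{(r)}_+(i,J,\theta^* )=\max_{I\in\mathcal{I}: i\in I\subseteq J}[(P^{(|I|,r)}\theta^*_I)_i-\theta^*_i]$ and $\mathrm{Bias}^{(r)}_-(i,J,\theta^* )=\min_{I\in\mathcal{I}: i\in I\subseteq J}[(P^{(|I|,r)}\theta^*_I)_i-\theta^*_i]$. Effective noise: $M^{(r)}=\max_{I\in\mathcal{I}}\big[\|P^{(|I|,r)}\epsilon_I\|_\infty\sqrt{|I|}\big]$. For $J=[j_1:j_2]\ni i$, $\mathrm{Dist}(i,\partial J)=\min\{i-j_1+1,\ j_2-i+1\}$, and $SE^{(r)}(i,J,\lambda)=\frac{M^{(r)}}{\sqrt{\mathrm{Dist}(i,\partial J)}}+\frac{M^{(r)}}{\sqrt{|J|}}+\frac{(M^{(r)})^2}{4\lambda}+\frac{\lambda}{|J|}$ (with $(M^{(r)})^2/(4\cdot 0)=+\infty$). *)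

From HB Require Import structures.
From mathcomp Require Import all_boot all_order all_algebra.
From mathcomp Require Import reals constructive_ereal.
Set Implicit Arguments. Unset Strict Implicit. Unset Printing Implicit Defensive.
Import Order.TTheory GRing.Theory Num.Theory.
Local Open Scope ring_scope.

(* Conventions: indices are 0-based, position k : 'I_n stands for k+1 in [n].
   An interval [a:b] (1 <= a <= b <= n in the paper) is a pair of ordinals
   (a, b) with a <= b. *)

Section MMTF.
Variables (R : realType) (n : nat).

Definition interval := {ab : 'I_n * 'I_n | (ab.1 <= ab.2)%N}.
Definition ilo (I : interval) : nat := (val I).1.
Definition ihi (I : interval) : nat := (val I).2.
Definition in_int (i : 'I_n) (I : interval) : bool := (ilo I <= i <= ihi I)%N.
Definition isize (I : interval) : nat := (ihi I - ilo I).+1.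
Definition subint (I J : interval) : bool := (ilo J <= ilo I)%N && (ihi I <= ihi J)%N.

(* entry k (0-based, as nat) of a vector of R^n, 0 outside range (never used out of range) *)
Definition vat (v : 'rV[R]_n) (k : nat) : R :=
  match insub k with Some j => v 0 j | None => 0 end.

Definition restr (v : 'rV[R]_n) (I : interval) : 'rV[R]_(isize I) :=
  \row_(k < isize I) vat v (ilo I + k).

(* orthogonal projection onto the row space of A : 'M_(p, m):
   projection onto <<A>> parallel to its orthogonal complement
   {u | u *m A^T = 0} = kermx A^T *)
Definition orthoproj (p m : nat) (A : 'M[R]_(p, m)) : 'M[R]_m :=
  proj_mx <<A>>%MS (kermx A^T).

(* Rows span {(p(t_a),...,p(t_b)) : deg p <= r}, t_k = k/n (1-based);
   0-based position ilo I + k corresponds to 1-based ilo I + k + 1. *)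
Definition polybasis (r : nat) (I : interval) : 'M[R]_(r.+1, isize I) :=
  \matrix_(j < r.+1, k < isize I) (((ilo I + k).+1)%:R / n%:R) ^+ j.

Definition Pmat (r : nat) (I : interval) : 'M[R]_(isize I) :=
  orthoproj (polybasis r I).

Definition projat (r : nat) (v : 'rV[R]_n) (I : interval) (i : 'I_n) : R :=
  (restr v I *m Pmat r I) 0 (inord (i - ilo I)).

Definition in_int_nat (k : nat) (I : interval) : bool := (ilo I <= k <= ihi I)%N.

Definition Cst (I J : interval) : R :=
  if ~~ in_int_nat (ilo J) I && ~~ in_int_nat (ihi J) I then 1
  else if I == J then -1 else 0.

Local Open Scope ereal_scope.

Definition emax (T : finType) (P : pred T) (F : T -> \bar R) : \bar R :=
  \big[Order.max/-oo]_(x | P x) F x.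
Definition emin (T : finType) (P : pred T) (F : T -> \bar R) : \bar R :=
  \big[Order.min/+oo]_(x | P x) F x.

Definition is_mmtf (r : nat) (lam : R) (y th : 'rV[R]_n) : Prop :=
  forall i : 'I_n,
    emax (fun J => in_int i J)
      (fun J => emin (fun I => in_int i I && subint I J)
         (fun I => (projat r y I i + lam * Cst I J / (isize I)%:R)%:E))
    <= (th 0 i)%:E
  /\ (th 0 i)%:E <=
    emin (fun J => in_int i J)
      (fun J => emax (fun I => in_int i I && subint I J)
         (fun I => (projat r y I i - lam * Cst I J / (isize I)%:R)%:E)).

Definition Bias_plus (r : nat) (i : 'I_n) (J : interval) (th : 'rV[R]_n) : \bar R :=
  emax (fun I => in_int i I && subint I J) (fun I => (projat r th I i - th 0 i)%:E).
Definition Bias_minus (r : nat) (i : 'I_n) (J : interval) (th : 'rV[R]_n) : \bar R :=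
  emin (fun I => in_int i I && subint I J) (fun I => (projat r th I i - th 0 i)%:E).

Local Close Scope ereal_scope.

Definition supnorm (m : nat) (w : 'rV[R]_m) : R := \big[Num.max/0]_(k < m) `|w 0 k|.

(* M^{(r)} = max_I ||P v_I||_oo sqrt|I|  (all terms are >= 0) *)
Definition Meff (r : nat) (eps : 'rV[R]_n) : R :=
  \big[Num.max/0]_(I : interval)
    (supnorm (restr eps I *m Pmat r I) * Num.sqrt (isize I)%:R).

Definition Dist (i : 'I_n) (J : interval) : nat :=
  minn (i - ilo J).+1 (ihi J - i).+1.

(* SE^{(r)}(i,J,lam), with M^2/(4*0) = +oo *)
Definition SE (r : nat) (eps : 'rV[R]_n) (i : 'I_n) (J : interval) (lam : R) : \bar R :=
  let M := Meff r eps in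
  ((M / Num.sqrt (Dist i J)%:R + M / Num.sqrt (isize J)%:R + lam / (isize J)%:R)%:E
   + (if lam == 0%R then +oo else (M ^+ 2 / (4 * lam))%:E))%E.

End MMTF.

From Pilot Require Import Defs.
From HB Require Import structures.
From mathcomp Require Import all_boot all_order all_algebra.
From mathcomp Require Import reals constructive_ereal.
From mathcomp Require Import ring lra zify.
Import Order.TTheory GRing.Theory Num.Theory.
Local Open Scope ring_scope.

(* Fix i and an interval J containing it.  The lower defining inequality of
   the estimator provides an interval I with i in I, I inside J, and
   (P y_I)_i + lam C_{I,J} / |I| <= thetahat_i.  Splitting y = theta + eps,
   the theta-part (P theta_I)_i - theta_i is at least Bias_-(i, J), while the
   noise part obeys |(P eps_I)_i| <= M / sqrt|I|, and M / sqrt|I| minus the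
   penalty is at most SE(i, J, lam):
   - if C_{I,J} = 1, by AM-GM, M t - lam t^2 <= M^2 / (4 lam) for t = 1/sqrt|I|;
   - if I = J, the penalty is -lam / |J| and sqrt|I| = sqrt|J|;
   - otherwise I contains i and an endpoint of J, so |I| >= Dist(i, dJ).
   The upper bound is symmetric. *)

Section ExtendedExtremaWitness.
Context {R : realType} {T : finType} {P : pred T} {F : T -> \bar R}.
Local Open Scope ereal_scope.

Lemma emin_le_EFin_exists (x : R) :
  emin P F <= x%:E -> exists2 t, P t & F t <= x%:E.
Proof.
rewrite /emin; elim/big_rec: _ => [//|t v Pt IH].
by rewrite ge_min => /orP[Ft|/IH//]; exists t.
Qed.

Lemma EFin_le_emax_exists (x : R) :
  x%:E <= emax P F -> exists2 t, P t & x%:E <= F t.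
Proof.
rewrite /emax; elim/big_rec: _ => [//|t v Pt IH].
by rewrite le_max => /orP[Ft|/IH//]; exists t.
Qed.

End ExtendedExtremaWitness.

Lemma linear_sub_quadratic_le (R : realFieldType) (M lam t : R) :
  0 < lam -> M * t - lam * t ^+ 2 <= M ^+ 2 / (4 * lam).
Proof.
move=> lam_gt0.
have -> : M ^+ 2 / (4 * lam) = M * t - lam * t ^+ 2 + (M - 2 * lam * t) ^+ 2 / (4 * lam).
  by field; rewrite ?mulf_neq0 ?gt_eqF // pnatr_eq0.
by rewrite lerDl divr_ge0 ?sqr_ge0 // ltW // mulr_gt0.
Qed.

Section MinmaxTrendFiltering.
Context {R : realType} {n : nat}.
Implicit Types (u v y th eps : 'rV[R]_n) (lam : R) (i : 'I_n) (I J : Defs.interval n).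

Lemma vatD u v k : vat (u + v) k = vat u k + vat v k.
Proof. by rewrite /vat; case: insub => [j|]; rewrite ?mxE ?addr0. Qed.

Lemma restrD u v I : restr (u + v) I = restr u I + restr v I.
Proof. by apply/rowP => k; rewrite !mxE vatD. Qed.

Lemma projatD r u v I i : projat r (u + v) I i = projat r u I i + projat r v I i.
Proof. by rewrite /projat restrD mulmxDl mxE. Qed.

Lemma norm_projat_le_Meff r eps I i :
  `|projat r eps I i| * Num.sqrt (isize I)%:R <= Meff r eps.
Proof.
have entry_le : `|projat r eps I i| <= supnorm (restr eps I *m Pmat R r I).
  by rewrite /supnorm (bigD1 (inord (i - ilo I))) //= le_max lexx.
apply: le_trans (ler_wpM2r (sqrtr_ge0 _) entry_le) _.
by rewrite /Meff (bigD1 I) //= le_max lexx.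
Qed.

Lemma Cst_cases {i I J} : in_int i I -> subint I J ->
  [\/ Cst R I J = 1, Cst R I J = -1 /\ I = J
    | Cst R I J = 0 /\ (Dist i J <= isize I)%N].
Proof.
move=> iI sIJ; rewrite /Cst; case: ifP => [_|endpoint_in_I]; first exact: Or31.
case: eqP => [->|_]; first exact: Or32.
apply: Or33; split => //; move/negbT: endpoint_in_I.
move: iI sIJ; rewrite /in_int /subint /in_int_nat /Dist /isize negb_and !negbK.
move=> /andP[? ?] /andP[? ?] /orP[/andP[? ?]|/andP[? ?]]; lia.
Qed.

Lemma noise_sub_penalty_le r eps lam i I J :
  0 < lam -> in_int i I -> subint I J ->
  `|projat r eps I i| - lam * Cst R I J / (isize I)%:R <=
  Meff r eps / Num.sqrt (Dist i J)%:R + Meff r eps / Num.sqrt (isize J)%:R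
  + lam / (isize J)%:R + Meff r eps ^+ 2 / (4 * lam).
Proof.
move=> lam_gt0 iI sIJ; set M := Meff r eps.
have sqrt_gt0 k : (0 < k)%N -> 0 < Num.sqrt k%:R :> R by rewrite sqrtr_gt0 ltr0n.
have sI_gt0 : 0 < Num.sqrt (isize I)%:R :> R by exact: sqrt_gt0.
have sJ_gt0 : 0 < Num.sqrt (isize J)%:R :> R by exact: sqrt_gt0.
have sD_gt0 : 0 < Num.sqrt (Dist i J)%:R :> R by rewrite sqrt_gt0 // leq_min.
have noise_le : `|projat r eps I i| <= M / Num.sqrt (isize I)%:R.
  by rewrite ler_pdivlMr // norm_projat_le_Meff.
have M_ge0 : 0 <= M.
  exact: le_trans (mulr_ge0 (normr_ge0 _) (sqrtr_ge0 _)) (norm_projat_le_Meff r eps I i).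
have dist_term_ge0 : 0 <= M / Num.sqrt (Dist i J)%:R by rewrite divr_ge0 // ltW.
have size_term_ge0 : 0 <= M / Num.sqrt (isize J)%:R by rewrite divr_ge0 // ltW.
have penalty_term_ge0 : 0 <= lam / (isize J)%:R by rewrite divr_ge0 // ltW.
have amgm_term_ge0 : 0 <= M ^+ 2 / (4 * lam) by rewrite divr_ge0 ?sqr_ge0 // ltW // mulr_gt0.
case: (Cst_cases iI sIJ) => [->|[-> eqIJ]|[-> Dist_le]].
- have := @linear_sub_quadratic_le _ M lam (Num.sqrt (isize I)%:R)^-1 lam_gt0.
  by rewrite exprVn sqr_sqrtr // mulr1; lra.
- by subst J; rewrite mulrN1 mulNr; lra.
- have : M / Num.sqrt (isize I)%:R <= M / Num.sqrt (Dist i J)%:R.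
    by rewrite ler_wpM2l // lef_pV2 ?posrE // ler_sqrt ?ler0n // ler_nat.
  by rewrite mulr0 mul0r; lra.
Qed.

Local Open Scope ereal_scope.

Lemma noise_sub_penalty_le_SE r eps {lam i I J} :
  (0 <= lam)%R -> in_int i I -> subint I J ->
  (`|projat r eps I i| - lam * Cst R I J / (isize I)%:R)%:E <= SE r eps i J lam.
Proof.
move=> lam_ge0 iI sIJ; rewrite /SE; case: eqP => [_|/eqP lam_neq0].
  by rewrite addey // leey.
rewrite -EFinD lee_fin; apply: noise_sub_penalty_le => //.
by rewrite lt_def lam_neq0.
Qed.

Lemma mmtf_lower_witness {r lam y th i J} : is_mmtf r lam y th -> in_int i J ->
  exists2 I, in_int i I && subint I J &
    (projat r y I i + lam * Cst R I J / (isize I)%:R <= th 0 i)%R.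
Proof.
move=> mmtf iJ; have [lower _] := mmtf i.
have [I IJ] := emin_le_EFin_exists _ (le_trans (le_bigmax_cond _ _ iJ) lower).
by rewrite lee_fin; exists I.
Qed.

Lemma mmtf_upper_witness {r lam y th i J} : is_mmtf r lam y th -> in_int i J ->
  exists2 I, in_int i I && subint I J &
    (th 0 i <= projat r y I i - lam * Cst R I J / (isize I)%:R)%R.
Proof.
move=> mmtf iJ; have [_ upper] := mmtf i.
have [I IJ] := EFin_le_emax_exists _ (le_trans upper (bigmin_le_cond _ _ iJ)).
by rewrite lee_fin; exists I.
Qed.

End MinmaxTrendFiltering.

Theorem proposition1 (R : realType) (n r : nat) (lam : R)
    (theta eps thetahat : 'rV[R]_n) :
  0 <= lam ->
  is_mmtf r lam (theta + eps) thetahat ->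
  forall i : 'I_n,
    (emax (fun J => in_int i J)
       (fun J => Bias_minus r i J theta - SE r eps i J lam)
     <= (thetahat 0 i - theta 0 i)%:E
     /\ (thetahat 0 i - theta 0 i)%:E
        <= emin (fun J => in_int i J)
             (fun J => Bias_plus r i J theta + SE r eps i J lam))%E.
Proof.
move=> lam_ge0 mmtf i; split.
- apply: bigmax_le => [|J iJ]; first exact: leNye.
  have [I /andP[iI sIJ]] := mmtf_lower_witness mmtf iJ.
  rewrite projatD => est_ge.
  have bias_le : (Bias_minus r i J theta <= (projat r theta I i - theta 0 i)%:E)%E.
    by apply: bigmin_le_cond; rewrite iI sIJ.
  apply: le_trans (leeB bias_le (noise_sub_penalty_le_SE r eps lam_ge0 iI sIJ)) _.
  rewrite -EFinB lee_fin; have := ler_norm (- projat r eps I i); rewrite normrN.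
  lra.
- apply: le_bigmin => [|J iJ]; first exact: leey.
  have [I /andP[iI sIJ]] := mmtf_upper_witness mmtf iJ.
  rewrite projatD => est_le.
  have le_bias : ((projat r theta I i - theta 0 i)%:E <= Bias_plus r i J theta)%E.
    by apply: le_bigmax_cond; rewrite iI sIJ.
  apply: le_trans (leeD le_bias (noise_sub_penalty_le_SE r eps lam_ge0 iI sIJ)).
  rewrite -EFinD lee_fin; have := ler_norm (projat r eps I i).
  lra.
Qed.
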